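(* Let $a>1$ and $c,d>0$ be fixed. There exist positive constants $M_x$ and $M_y$ (independent of $m,n$ and of $(x,y)$) such that for all $(x,y)\in[0,c]\times[0,d]$ and all $m,n\in\mathbb{N}$, \[ \hat{Y}_{m,n,a}\big((t-x)^4;x,y\big)\leq \frac{M_x}{m^2},\qquad \hat{Y}_{m,n,a}\big((s-y)^4;x,y\big)\leq \frac{M_y}{n^2}. \]
   Context: For $m,n\in\mathbb{N}$, $(x,y)\in[0,\infty)^2$ and integers $k_1,k_2\ge0$ let \[ s_{m,n,k_1,k_2}^a(x,y)=a^{-\frac{x}{a^{1/m}-1}}\,a^{-\frac{y}{a^{1/n}-1}}\,\frac{x^{k_1}y^{k_2}(\log a)^{k_1+k_2}}{(a^{1/m}-1)^{k_1}(a^{1/n}-1)^{k_2}\,k_1!\,k_2!}, \] and \[ \hat{Y}_{m,n,a}(f;x,y)=\sum_{k_1=0}^{\infty}\sum_{k_2=0}^{\infty}s_{m,n,k_1,k_2}^a(x,y)\,f\!\left(\tfrac{k_1}{m},\tfrac{k_2}{n}\right). \] $\hat{Y}_{m,n,a}(g(t,s);x,y)$ denotes the operator applied to $(t,s)\mapsto g(t,s)$ (with $t=k_1/m$, $s=k_2/n$). *)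

From Stdlib Require Import Reals.
From Coquelicot Require Import Coquelicot.
Open Scope R_scope.

Definition s_basis (m n : nat) (a : R) (k1 k2 : nat) (x y : R) : R :=
  let bm := Rpower a (1 / INR m) - 1 in
  let bn := Rpower a (1 / INR n) - 1 in
  Rpower a (- (x / bm)) * Rpower a (- (y / bn)) *
  ((x ^ k1 * y ^ k2 * (ln a) ^ (k1 + k2)) /
   (bm ^ k1 * bn ^ k2 * INR (Factorial.fact k1) * INR (Factorial.fact k2))).

Definition Yhat (m n : nat) (a : R) (f : R -> R -> R) (x y : R) : R :=
  Series (fun k1 : nat =>
    Series (fun k2 : nat =>
      s_basis m n a k1 k2 x y * f (INR k1 / INR m) (INR k2 / INR n))).

(* Each basis function s^a_{m,n,k1,k2}(x,y) is a product of two Poisson weights,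
   with parameters l = x ln a / (a^(1/m) - 1) and l' = y ln a / (a^(1/n) - 1), so
   applied to a function of t alone the operator is the expectation of f(K/m) for
   K ~ Poisson(l).  The falling-factorial moments of Poisson(l) are l^j, whence
   E (K - X)^4 = l + 3 l^2 - 4 e l + 6 e^2 l + e^4 with e = X - l.  For X = m x,
   the inequalities u <= e^u - 1 and e^u (1 - u) <= 1 at u = ln a / m give
   0 <= l <= m x and 0 <= e <= x ln a, so this fourth moment is O(m^2) uniformly
   for x in [0, c]; dividing by m^4 gives the bound. *)

From Stdlib Require Import Reals Lra Lia.
From Coquelicot Require Import Coquelicot.
Open Scope R_scope.

(* [is_series_ext] with the pointwise equation stated at type [R], where [ring] applies *)
Lemma is_series_Rext (a b : nat -> R) (l : R) :
  (forall k, a k = b k) -> is_series a l -> is_series b l.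
Proof. intro H. apply is_series_ext. exact H. Qed.

Lemma is_series_Rplus (a b : nat -> R) (la lb : R) :
  is_series a la -> is_series b lb -> is_series (fun k => a k + b k) (la + lb).
Proof. exact (is_series_plus a b la lb). Qed.

Definition poisson (l : R) (k : nat) : R :=
  exp (- l) * (l ^ k / INR (Factorial.fact k)).

Fixpoint falling (x : R) (j : nat) : R :=
  match j with
  | O => 1
  | S j => x * falling (x - 1) j
  end.

Lemma is_series_poisson (l : R) : is_series (poisson l) 1.
Proof.
  assert (H := is_exp_Reals l). apply is_pseries_R in H.
  apply is_series_scal_r with (c := exp (- l)) in H.
  rewrite <- exp_plus, Rplus_opp_r, exp_0 in H.
  revert H. apply is_series_Rext.
  intro k. unfold poisson, Rdiv. ring.
Qed.

Lemma is_series_poisson_mul_INR (l v : R) (h : nat -> R) :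
  is_series (fun k => poisson l k * h (S k)) v ->
  is_series (fun k => poisson l k * INR k * h k) (l * v).
Proof.
  intro H. apply is_series_decr_1.
  match goal with |- is_series _ ?z => replace z with (v * l)
    by (simpl; unfold plus, opp; simpl; ring) end.
  apply is_series_scal_r with (c := l) in H. revert H. apply is_series_Rext.
  intro k. unfold poisson. change (Factorial.fact (S k)) with (S k * Factorial.fact k)%nat.
  rewrite mult_INR.
  assert (INR (Factorial.fact k) <> 0) by apply INR_fact_neq_0.
  assert (INR (S k) <> 0) by (apply not_0_INR; lia).
  simpl pow. field. auto.
Qed.

Lemma is_series_poisson_falling (l : R) (j : nat) :
  is_series (fun k => poisson l k * falling (INR k) j) (l ^ j).
Proof.
  induction j as [|j IHj].
  - generalize (is_series_poisson l). apply is_series_Rext. intro k. simpl. ring.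
  - assert (H : is_series (fun k => poisson l k * INR k * falling (INR k - 1) j)
                         (l * l ^ j)).
    { apply is_series_poisson_mul_INR. revert IHj. apply is_series_Rext.
      intro k. rewrite S_INR. replace (INR k + 1 - 1) with (INR k) by ring.
      reflexivity. }
    revert H. apply is_series_Rext. intro k. simpl. ring.
Qed.

Lemma is_series_poisson_falling_comb (l : R) (c : nat -> R) (N : nat) :
  is_series (fun k => poisson l k * sum_f_R0 (fun j => c j * falling (INR k) j) N)
            (sum_f_R0 (fun j => c j * l ^ j) N).
Proof.
  induction N as [|N IHN]; cbn [sum_f_R0].
  - generalize (is_series_scal_r (c 0%nat) _ _ (is_series_poisson_falling l 0)).
    rewrite (Rmult_comm (l ^ 0)).
    apply is_series_Rext. intro k. simpl. ring.
  - generalize (is_series_Rplus _ _ _ _ IHN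
      (is_series_scal_r (c (S N)) _ _ (is_series_poisson_falling l (S N)))).
    rewrite (Rmult_comm (l ^ S N)).
    apply is_series_Rext. intro k. ring.
Qed.

Definition poisson_moment4 (l X : R) : R :=
  l + 3 * l ^ 2 - 4 * (X - l) * l + 6 * (X - l) ^ 2 * l + (X - l) ^ 4.

Lemma is_series_poisson_moment4 (l X : R) :
  is_series (fun k => poisson l k * (INR k - X) ^ 4) (poisson_moment4 l X).
Proof.
  (* the coefficients of [(k - X)^4] in the falling-factorial basis *)
  set (c (j : nat) := match j with
                      | O => X ^ 4
                      | 1%nat => 1 - 4 * X + 6 * X ^ 2 - 4 * X ^ 3
                      | 2%nat => 7 - 12 * X + 6 * X ^ 2
                      | 3%nat => 6 - 4 * X
                      | _ => 1
                      end).
  generalize (is_series_poisson_falling_comb l c 4).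
  replace (sum_f_R0 (fun j => c j * l ^ j) 4) with (poisson_moment4 l X)
    by (unfold poisson_moment4; simpl; ring).
  apply is_series_Rext. intro k. simpl. ring.
Qed.

Lemma poisson_moment4_le (l X C D : R) :
  0 <= l <= C -> 0 <= X - l <= D ->
  poisson_moment4 l X <= C + 3 * C ^ 2 + 6 * D ^ 2 * C + D ^ 4.
Proof.
  intros Hl Hd. unfold poisson_moment4. set (e := X - l) in *.
  assert (Hel : 0 <= 4 * e * l) by nra.
  assert (Hl2 : l ^ 2 <= C ^ 2) by (apply pow_incr; lra).
  assert (He2 : e ^ 2 <= D ^ 2) by (apply pow_incr; lra).
  assert (He4 : e ^ 4 <= D ^ 4) by (apply pow_incr; lra).
  assert (He2l : e ^ 2 * l <= D ^ 2 * C)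
    by (apply Rmult_le_compat; [apply pow_le; lra | lra | lra | lra]).
  lra.
Qed.

Lemma ratio_expm1_bounds (u : R) :
  0 < u -> 0 < u / (exp u - 1) <= 1 /\ 1 - u / (exp u - 1) <= u.
Proof.
  intro Hu.
  assert (Hup : 1 + u <= exp u) by apply exp_ineq1_le.
  assert (Hdown : exp u * (1 - u) <= 1).
  { assert (H := exp_ineq1_le (- u)). assert (Hexp := exp_pos u).
    assert (E : exp u * exp (- u) = 1) by (rewrite <- exp_plus, Rplus_opp_r; apply exp_0).
    nra. }
  assert (Hpos : 0 < exp u - 1) by lra.
  split; [split|].
  - apply Rdiv_lt_0_compat; lra.
  - apply Rmult_le_reg_r with (exp u - 1); [lra|]. field_simplify; lra.
  - apply Rmult_le_reg_r with (exp u - 1); [lra|].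
    unfold Rminus at 1. rewrite Rmult_plus_distr_r. field_simplify; lra.
Qed.

Lemma Rpower_inv_INR_gt_1 (a : R) (m : nat) :
  1 < a -> (0 < m)%nat -> 0 < Rpower a (1 / INR m) - 1.
Proof.
  intros Ha Hm.
  assert (HM : 0 < INR m) by (apply lt_0_INR; exact Hm).
  assert (H : Rpower a 0 < Rpower a (1 / INR m))
    by (apply Rpower_lt; [lra | apply Rdiv_lt_0_compat; lra]).
  rewrite Rpower_O in H; lra.
Qed.

Definition poisson_param (a : R) (m : nat) (x : R) : R :=
  x * ln a / (Rpower a (1 / INR m) - 1).

Lemma poisson_param_bounds (a : R) (m : nat) (x : R) :
  1 < a -> (0 < m)%nat -> 0 <= x ->
  0 <= poisson_param a m x <= INR m * x /\ INR m * x - poisson_param a m x <= x * ln a.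
Proof.
  intros Ha Hm Hx.
  assert (Hln : 0 < ln a) by (rewrite <- ln_1; apply ln_increasing; lra).
  assert (HM : 0 < INR m) by (apply lt_0_INR; exact Hm).
  set (u := ln a / INR m).
  assert (Hu : 0 < u) by (apply Rdiv_lt_0_compat; lra).
  assert (Hb := Rpower_inv_INR_gt_1 a m Ha Hm).
  assert (Hexp : Rpower a (1 / INR m) = exp u) by (unfold Rpower, u; f_equal; field; lra).
  unfold poisson_param. rewrite Hexp in *.
  destruct (ratio_expm1_bounds u Hu) as [[Hr0 Hr1] Hr2].
  assert (Hlnu : ln a = u * INR m) by (unfold u; field; lra).
  rewrite Hlnu.
  replace (x * (u * INR m) / (exp u - 1)) with (INR m * x * (u / (exp u - 1)))
    by (field; lra).
  set (r := u / (exp u - 1)) in *.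
  assert (0 <= INR m * x) by nra.
  split; [split|]; nra.
Qed.

Lemma s_basis_poisson (m n : nat) (a : R) (k1 k2 : nat) (x y : R) :
  1 < a -> (0 < m)%nat -> (0 < n)%nat ->
  s_basis m n a k1 k2 x y =
  poisson (poisson_param a m x) k1 * poisson (poisson_param a n y) k2.
Proof.
  intros Ha Hm Hn.
  assert (Hbm := Rpower_inv_INR_gt_1 a m Ha Hm).
  assert (Hbn := Rpower_inv_INR_gt_1 a n Ha Hn).
  unfold s_basis, poisson, poisson_param.
  set (bm := Rpower a (1 / INR m) - 1) in *.
  set (bn := Rpower a (1 / INR n) - 1) in *.
  unfold Rpower at 1 2.
  replace (- (x / bm) * ln a) with (- (x * ln a / bm)) by (field; lra).
  replace (- (y / bn) * ln a) with (- (y * ln a / bn)) by (field; lra).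
  unfold Rdiv. rewrite pow_add, !Rpow_mult_distr, !pow_inv.
  assert (bm ^ k1 <> 0) by (apply pow_nonzero; lra).
  assert (bn ^ k2 <> 0) by (apply pow_nonzero; lra).
  assert (INR (Factorial.fact k1) <> 0) by apply INR_fact_neq_0.
  assert (INR (Factorial.fact k2) <> 0) by apply INR_fact_neq_0.
  field. auto.
Qed.

Lemma Series_Series_mul (F G : nat -> R) :
  Series (fun i => Series (fun j => F i * G j)) = Series F * Series G.
Proof.
  rewrite <- Series_scal_r. apply Series_ext. intro i. apply Series_scal_l.
Qed.

Lemma Series_poisson (l : R) : Series (poisson l) = 1.
Proof. exact (is_series_unique _ _ (is_series_poisson l)). Qed.

Lemma Yhat_fst (m n : nat) (a : R) (f : R -> R) (x y : R) :
  1 < a -> (0 < m)%nat -> (0 < n)%nat ->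
  Yhat m n a (fun t _ => f t) x y =
  Series (fun k => poisson (poisson_param a m x) k * f (INR k / INR m)).
Proof.
  intros Ha Hm Hn. unfold Yhat.
  rewrite (Series_ext _ (fun k1 => Series (fun k2 =>
    (poisson (poisson_param a m x) k1 * f (INR k1 / INR m)) *
    poisson (poisson_param a n y) k2))).
  - rewrite Series_Series_mul, Series_poisson. ring.
  - intro k1. apply Series_ext. intro k2. rewrite s_basis_poisson by assumption. ring.
Qed.

Lemma Yhat_snd (m n : nat) (a : R) (g : R -> R) (x y : R) :
  1 < a -> (0 < m)%nat -> (0 < n)%nat ->
  Yhat m n a (fun _ s => g s) x y =
  Series (fun k => poisson (poisson_param a n y) k * g (INR k / INR n)).
Proof.
  intros Ha Hm Hn. unfold Yhat.
  rewrite (Series_ext _ (fun k1 => Series (fun k2 =>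
    poisson (poisson_param a m x) k1 *
    (poisson (poisson_param a n y) k2 * g (INR k2 / INR n))))).
  - rewrite Series_Series_mul, Series_poisson. ring.
  - intro k1. apply Series_ext. intro k2. rewrite s_basis_poisson by assumption. ring.
Qed.

Definition moment4_const (c L : R) : R :=
  c + 3 * c ^ 2 + 6 * (c * L) ^ 2 * c + (c * L) ^ 4.

Lemma moment4_const_pos (c L : R) : 0 < c -> 0 < moment4_const c L.
Proof.
  intro Hc. unfold moment4_const.
  assert (0 <= (c * L) ^ 2 * c) by (apply Rmult_le_pos; [apply pow2_ge_0 | lra]).
  assert (0 <= (c * L) ^ 4) by (replace 4%nat with (2 * 2)%nat by reflexivity;
                                rewrite pow_mult; apply pow2_ge_0).
  nra.
Qed.

Lemma moment4_const_scale (c L M : R) :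
  0 <= c -> 1 <= M ->
  c * M + 3 * (c * M) ^ 2 + 6 * (c * L) ^ 2 * (c * M) + (c * L) ^ 4
  <= moment4_const c L * M ^ 2.
Proof.
  intros Hc HM. unfold moment4_const.
  assert (HM2 : M <= M ^ 2) by nra.
  assert (0 <= c * (M ^ 2 - M)) by (apply Rmult_le_pos; lra).
  assert (0 <= (c * L) ^ 2 * c * (M ^ 2 - M))
    by (apply Rmult_le_pos; [apply Rmult_le_pos; [apply pow2_ge_0 | lra] | lra]).
  assert (0 <= (c * L) ^ 4 * (M ^ 2 - 1)).
  { apply Rmult_le_pos; [|nra].
    replace 4%nat with (2 * 2)%nat by reflexivity. rewrite pow_mult. apply pow2_ge_0. }
  lra.
Qed.

Lemma Series_poisson_param_moment4_le (a c : R) (m : nat) (x : R) :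
  1 < a -> (0 < m)%nat -> 0 <= x <= c ->
  Series (fun k => poisson (poisson_param a m x) k * (INR k / INR m - x) ^ 4)
  <= moment4_const c (ln a) / INR m ^ 2.
Proof.
  intros Ha Hm Hx.
  assert (Hln : 0 < ln a) by (rewrite <- ln_1; apply ln_increasing; lra).
  assert (HM : 1 <= INR m) by (apply (le_INR 1); exact Hm).
  destruct (poisson_param_bounds a m x Ha Hm (proj1 Hx)) as [Hl Hdefect].
  set (l := poisson_param a m x) in *.
  assert (Hser : is_series (fun k => poisson l k * (INR k / INR m - x) ^ 4)
                           (poisson_moment4 l (INR m * x) / INR m ^ 4)).
  { generalize (is_series_scal_r (/ INR m ^ 4) _ _ (is_series_poisson_moment4 l (INR m * x))).
    apply is_series_Rext. intro k. field. lra. }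
  rewrite (is_series_unique _ _ Hser).
  assert (Hmom : poisson_moment4 l (INR m * x) <=
    c * INR m + 3 * (c * INR m) ^ 2 + 6 * (c * ln a) ^ 2 * (c * INR m) + (c * ln a) ^ 4).
  { apply poisson_moment4_le; split; nra. }
  assert (Hscale := moment4_const_scale c (ln a) (INR m) ltac:(lra) HM).
  apply Rle_trans with (moment4_const c (ln a) * INR m ^ 2 / INR m ^ 4).
  - unfold Rdiv. apply Rmult_le_compat_r; [left; apply Rinv_0_lt_compat, pow_lt|]; lra.
  - right. field. lra.
Qed.

Theorem lemma5 (a c d : R) (ha : 1 < a) (hc : 0 < c) (hd : 0 < d) :
  exists Mx My : R, 0 < Mx /\ 0 < My /\
    forall (m n : nat) (x y : R), (0 < m)%nat -> (0 < n)%nat ->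
      0 <= x <= c -> 0 <= y <= d ->
      Yhat m n a (fun t s => (t - x) ^ 4) x y <= Mx / (INR m) ^ 2 /\
      Yhat m n a (fun t s => (s - y) ^ 4) x y <= My / (INR n) ^ 2.
Proof.
  exists (moment4_const c (ln a)), (moment4_const d (ln a)).
  split; [apply moment4_const_pos; exact hc|].
  split; [apply moment4_const_pos; exact hd|].
  intros m n x y hm hn hx hy.
  rewrite (Yhat_fst m n a (fun t => (t - x) ^ 4)) by assumption.
  rewrite (Yhat_snd m n a (fun s => (s - y) ^ 4)) by assumption.
  split; apply Series_poisson_param_moment4_le; assumption.
Qed.
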